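(* Let $Z$ be a topological space and $\ell>0$. Then there is a homeomorphism $\mathbb{P}^{\mathcal{G}}_{0,1}{\rm Glob}^{\mathcal{G}}_\ell(Z)\cong\mathcal{G}(1,\ell)\times Z$.
   Context: Work in $\mathbf{Top}$, the category of $\Delta$-generated spaces (or $\Delta$-Hausdorff $\Delta$-generated spaces), cartesian closed with internal hom ${\rm TOP}$ (the $\Delta$-kelleyfication of the compact-open topology); products are taken in $\mathbf{Top}$; subsets carry the $\Delta$-kelleyfication of the relative topology. $\mathcal{G}(\ell_1,\ell_2)$: set of nondecreasing homeomorphisms $[0,\ell_1]\to[0,\ell_2]$, as a subspace of ${\rm TOP}([0,\ell_1],[0,\ell_2])$. A multipointed $d$-space $X=(|X|,X^0,\mathbb{P}^{\mathcal{G}}X)$: a space, a subset of states, a set of continuous execution paths $[0,1]\to|X|$ with endpoints in $X^0$, stable under precomposition by $\mathcal{G}(1,1)$ and normalized composition. $\mathbb{P}^{\mathcal{G}}_{\alpha,\beta}X$, the set of execution paths from $\alpha$ to $\beta$, is a subspace of ${\rm TOP}([0,1],|X|)$. ${\rm Glob}^{\mathcal{G}}_\ell(Z)$: underlying space the quotient of $\{0,1\}\sqcup Z\times[0,\ell]$ identifying every $(z,0)$ with $0$ and every $(z,\ell)$ with $1$; states $\{0,1\}$; execution paths $\delta_z\circ\phi$ for $z\in Z$, $\phi\in\mathcal{G}(1,\ell)$, where $\delta_z(t)=(z,t)$. *)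

From HB Require Import structures.
From mathcomp Require Import all_boot all_order all_algebra.
From mathcomp Require Import Rstruct.
From Stdlib Require Import List.

Unset Printing Implicit Defensive.
Import Order.TTheory GRing.Theory Num.Theory.
Local Open Scope ring_scope.

Notation R := Rdefinitions.R.

Definition topology (T : Type) := (T -> Prop) -> Prop.

Definition is_topology {T : Type} (tau : topology T) : Prop :=
  tau (fun _ => True) /\ tau (fun _ => False) /\
  (forall U V, tau U -> tau V -> tau (fun x => U x /\ V x)) /\
  (forall F : (T -> Prop) -> Prop, (forall U, F U -> tau U) ->
     tau (fun x => exists U, F U /\ U x)).

Definition continuous_wrt {S T : Type} (sigma : topology S) (tau : topology T)
  (f : S -> T) : Prop := forall U, tau U -> sigma (fun x => U (f x)).

Definition induced {S T : Type} (f : S -> T) (tau : topology T) : topology S :=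
  fun V => exists U, tau U /\ forall x, V x <-> U (f x).

Definition final {S T : Type} (f : S -> T) (sigma : topology S) : topology T :=
  fun U => sigma (fun x => U (f x)).

Definition discrete_top (T : Type) : topology T := fun _ => True.

Definition sum_top {S T : Type} (sigma : topology S) (tau : topology T)
  : topology (S + T) :=
  fun W => sigma (fun x => W (inl x)) /\ tau (fun y => W (inr y)).

Definition prod_top {S T : Type} (sigma : topology S) (tau : topology T)
  : topology (S * T) :=
  fun W => forall p, W p -> exists U V, sigma U /\ tau V /\ U p.1 /\ V p.2 /\
    forall q, U q.1 -> V q.2 -> W q.

Definition generated {X : Type} (B : (X -> Prop) -> Prop) : topology X :=
  fun W => forall x, W x -> exists l : list (X -> Prop),
    (forall b, In b l -> B b) /\ (forall b, In b l -> b x) /\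
    (forall y, (forall b, In b l -> b y) -> W y).

Definition compact_in {T : Type} (tau : topology T) (K : T -> Prop) : Prop :=
  forall C : (T -> Prop) -> Prop, (forall U, C U -> tau U) ->
    (forall x, K x -> exists U, C U /\ U x) ->
    exists l : list (T -> Prop), (forall U, In U l -> C U) /\
      (forall x, K x -> exists U, In U l /\ U x).

Definition homeomorphic {S T : Type} (sigma : topology S) (tau : topology T) : Prop :=
  exists (f : S -> T) (g : T -> S),
    cancel f g /\ cancel g f /\ continuous_wrt sigma tau f /\ continuous_wrt tau sigma g.

Definition euclid_top : topology R :=
  fun U => forall x, U x -> exists e : R, 0 < e /\ forall y, `|y - x| < e -> U y.

Definition simplex (n : nat) :=
  {x : 'I_n.+1 -> R | (forall i, 0 <= x i) /\ \sum_(i < n.+1) x i = 1}.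

Definition simplex_top (n : nat) : topology (simplex n) :=
  fun U => forall x, U x -> exists e : R, 0 < e /\
    forall y : simplex n, (forall i, `|proj1_sig y i - proj1_sig x i| < e) -> U y.

(* Delta-kelleyfication: final topology w.r.t. all continuous maps from simplices *)
Definition kelley {T : Type} (tau : topology T) : topology T :=
  fun U => forall (n : nat) (f : simplex n -> T),
    continuous_wrt (@simplex_top n) tau f -> @simplex_top n (fun x => U (f x)).

Definition Delta_generated {T : Type} (tau : topology T) : Prop :=
  forall U, tau U <-> kelley tau U.

Definition cmap {S T : Type} (sigma : topology S) (tau : topology T) :=
  {f : S -> T | continuous_wrt sigma tau f}.

Definition compact_open {S T : Type} (sigma : topology S) (tau : topology T)
  : topology (cmap sigma tau) :=
  generated (fun W => exists K U, compact_in sigma K /\ tau U /\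
     forall f : cmap sigma tau, W f <-> forall x, K x -> U (proj1_sig f x)).

Definition TOP_top {S T : Type} (sigma : topology S) (tau : topology T)
  : topology (cmap sigma tau) := kelley (compact_open sigma tau).

Definition seg (l : R) := {t : R | (0 <= t <= l)%R}.

Definition seg_top (l : R) : topology (seg l) :=
  kelley (induced (fun t : seg l => val t) euclid_top).

Definition is_G (l1 l2 : R) (f : cmap (seg_top l1) (seg_top l2)) : Prop :=
  (forall s t : seg l1, val s <= val t -> val (proj1_sig f s) <= val (proj1_sig f t)) /\
  exists g : seg l2 -> seg l1,
    cancel (proj1_sig f) g /\ cancel g (proj1_sig f) /\
    continuous_wrt (seg_top l2) (seg_top l1) g.

Definition Gsp (l1 l2 : R) := {f : cmap (seg_top l1) (seg_top l2) | is_G l1 l2 f}.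

Definition G_top (l1 l2 : R) : topology (Gsp l1 l2) :=
  kelley (induced (fun f : Gsp l1 l2 => proj1_sig f) (TOP_top (seg_top l1) (seg_top l2))).

(* Points of the quotient of {0,1} + Z x [0,l]: the two states, and the
   classes of the (z,t) with 0 < t < l (which are singletons). *)
Inductive glob_pt (Z : Type) (l : R) : Type :=
  | glob0 : glob_pt Z l
  | glob1 : glob_pt Z l
  | globint : Z -> {t : R | (0 < t < l)%R} -> glob_pt Z l.
Arguments glob0 {Z l}.
Arguments glob1 {Z l}.

Definition glob_q {Z : Type} (l : R) (p : bool + (Z * seg l)) : glob_pt Z l :=
  match p with
  | inl false => glob0
  | inl true => glob1
  | inr (z, t) =>
      match @insub R (fun u => (0 < u < l)%R) _ (val t) with
      | Some u => @globint Z l z u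
      | None => if val t == 0 then glob0 else glob1
      end
  end.

Definition glob_top {Z : Type} (tauZ : topology Z) (l : R) : topology (glob_pt Z l) :=
  kelley (final (@glob_q Z l)
    (sum_top (discrete_top bool) (kelley (prod_top tauZ (seg_top l))))).

Lemma zero_in_seg1 : (0 <= (0 : R) <= 1)%R.
Proof. by rewrite lexx ler01. Qed.
Lemma one_in_seg1 : (0 <= (1 : R) <= 1)%R.
Proof. by rewrite lexx ler01. Qed.
Definition seg1_0 : seg 1 := exist _ 0 zero_in_seg1.
Definition seg1_1 : seg 1 := exist _ 1 one_in_seg1.

Definition glob_exec {Z : Type} (tauZ : topology Z) (l : R)
  (g : cmap (seg_top 1) (glob_top tauZ l)) : Prop :=
  exists (z : Z) (phi : Gsp 1 l),
    forall t : seg 1, proj1_sig g t = glob_q l (inr (z, proj1_sig (proj1_sig phi) t)).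

Definition Pglob01 {Z : Type} (tauZ : topology Z) (l : R) :=
  {g : cmap (seg_top 1) (glob_top tauZ l) |
     glob_exec tauZ l g /\ proj1_sig g seg1_0 = glob0 /\ proj1_sig g seg1_1 = glob1}.

Definition Pglob01_top {Z : Type} (tauZ : topology Z) (l : R) : topology (Pglob01 tauZ l) :=
  kelley (induced (fun g : Pglob01 tauZ l => proj1_sig g)
                  (TOP_top (seg_top 1) (glob_top tauZ l))).

(** An execution path from 0 to 1 of Glob_l(Z) is delta_z o phi with phi in
    G(1,l). The quotient map is injective in the time coordinate and phi(1/2)
    lies in ]0,l[, so the path determines (phi, z); this gives the two inverse
    bijections. The map path |-> (phi, z) is continuous because the subbasic
    sets {phi | phi(K) <= U} and {z in V} pull back to the subbasic sets
    {g | g(K) <= Z x U} and {g | g(1/2) in V x ]0,l[}. Conversely, for a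
    continuous simplex family s |-> (phi_s, z_s), the map (s, t) |-> phi_s(t)
    is jointly continuous (pointwise continuity plus monotonicity), open sets
    of the globe contain product neighbourhoods along the family, and a tube
    lemma over the compact K shows that {s | delta_(z_s) (phi_s(K)) <= U} is
    open. *)

From mathcomp Require Import all_boot all_order all_algebra.
From mathcomp Require Import Rstruct lra.
From Stdlib Require Import ClassicalEpsilon ProofIrrelevance FunctionalExtensionality.
From Stdlib Require Import PropExtensionality List.
Import Order.TTheory GRing.Theory Num.Theory.
Local Open Scope ring_scope.

Lemma open_ext {T} (tau : topology T) (A B : T -> Prop) :
  tau A -> (forall x, A x <-> B x) -> tau B.
Proof.
move=> hA AB; suff <- : A = B by [].
by apply: functional_extensionality => x; apply: propositional_extensionality.
Qed.

Lemma proj1_sig_inj {A} {P : A -> Prop} (x y : sig P) : proj1_sig x = proj1_sig y -> x = y.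
Proof.
by case: x => a ha; case: y => b hb /= ab; subst b; rewrite (proof_irrelevance _ ha hb).
Qed.

Lemma ge_minl (a b : R) : Num.min a b <= a.
Proof. by rewrite ge_min lexx. Qed.

Lemma ge_minr (a b : R) : Num.min a b <= b.
Proof. by rewrite ge_min lexx orbT. Qed.

Lemma kelley_open {T} (tau : topology T) U : tau U -> kelley tau U.
Proof. by move=> hU n f; apply. Qed.

Lemma kelley_setT {T} (tau : topology T) : kelley tau (fun _ => True).
Proof. by move=> n f _ x _; exists 1; split=> //; rewrite ltr01. Qed.

Lemma continuous_kelley_simplex {T n} {tau : topology T} {f : simplex n -> T} :
  continuous_wrt (simplex_top n) tau f -> continuous_wrt (simplex_top n) (kelley tau) f.
Proof. by move=> hf U; apply. Qed.

Lemma kelley_continuous {S T} (sigma : topology S) (tau : topology T) (f : S -> T) :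
  (forall n (s : simplex n -> S), continuous_wrt (simplex_top n) sigma s ->
      continuous_wrt (simplex_top n) tau (fun x => f (s x))) ->
  continuous_wrt (kelley sigma) (kelley tau) f.
Proof. by move=> hf U hU n s hs; apply: hU; apply: hf. Qed.

Lemma compact_in_point {T} (tau : topology T) (t0 : T) : compact_in tau (fun t => t = t0).
Proof.
move=> C _ hcov; have [U [CU Ut0]] := hcov t0 erefl.
exists [:: U]; split; first by move=> V [<-|[]].
by move=> x ->; exists U; split=> //; left.
Qed.

Lemma TOP_top_subbasic {S T} {sigma : topology S} {tau : topology T} {K U} :
  compact_in sigma K -> tau U ->
  TOP_top sigma tau (fun f => forall x, K x -> U (proj1_sig f x)).
Proof.
move=> hK hU; apply: kelley_open => f Kf.
exists [:: fun f => forall x, K x -> U (proj1_sig f x)]; split.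
  by move=> b [<-|[]]; exists K, U.
split=> [b [<-|[]] //|g gK]; exact: gK (or_introl erefl).
Qed.

Definition close {n} (e : R) (y x : simplex n) :=
  forall i, `|proj1_sig y i - proj1_sig x i| < e.

Lemma close_le {n} {d d' : R} {y x : simplex n} : d <= d' -> close d y x -> close d' y x.
Proof. by move=> dd' yx i; apply: lt_le_trans (yx i) dd'. Qed.

Lemma list_common_radius {A} (P : R -> A -> Prop) :
  (forall d d' a, 0 < d' -> d' <= d -> P d a -> P d' a) ->
  forall s : list A, (forall a, In a s -> exists2 d, 0 < d & P d a) ->
  exists2 d, 0 < d & forall a, In a s -> P d a.
Proof.
move=> Pmono; elim=> [|a s IH] hs; first by exists 1; rewrite ?ltr01.
have [d1 d1_gt0 Pd1] := hs a (or_introl erefl).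
have [d2 d2_gt0 Pd2] := IH (fun b hb => hs b (or_intror hb)).
have m_gt0 : 0 < Num.min d1 d2 by rewrite lt_min d1_gt0 d2_gt0.
exists (Num.min d1 d2) => // b [<-|hb].
  exact: Pmono m_gt0 (ge_minl _ _) Pd1.
exact: Pmono m_gt0 (ge_minr _ _) (Pd2 b hb).
Qed.

Lemma In_mem {T : eqType} (x : T) (s : list T) : x \in s -> In x s.
Proof. by elim: s => //= y s IH; rewrite inE => /orP[/eqP ->|/IH]; [left|right]. Qed.

Lemma pos_lower_bound {k} (F : 'I_k -> R) :
  exists2 m, 0 < m & forall i, 0 < F i -> m <= F i.
Proof.
have [m m_gt0 Hm] : exists2 m, 0 < m & forall i, In i (enum 'I_k) -> 0 < F i -> m <= F i.
  apply: list_common_radius => [d d' i _ d'd Pd /Pd|i _]; first exact: le_trans.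
  by have [Fi|_] := boolP (0 < F i); [exists (F i) | exists 1; rewrite ?ltr01].
by exists m => // i; apply: Hm; apply: In_mem; rewrite mem_enum.
Qed.

Lemma simplex_top_const n (P : Prop) : simplex_top n (fun _ => P).
Proof. by move=> x HP; exists 1; split=> //; rewrite ltr01. Qed.

Lemma continuous_generated {X n} (B : (X -> Prop) -> Prop) (c : simplex n -> X) :
  (forall b, B b -> simplex_top n (fun s => b (c s))) ->
  continuous_wrt (simplex_top n) (generated B) c.
Proof.
move=> hB W hW s Ws; have [bs [bsB [bs_s bsW]]] := hW _ Ws.
have [d d_gt0 Hd] : exists2 d : R, 0 < d & forall b, In b bs -> forall y, close d y s -> b (c y).
  apply: list_common_radius => [d d' b _ d'd Pd y /(close_le d'd) /Pd // | b hb].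
  by have [e [e_gt0 He]] := hB b (bsB b hb) s (bs_s b hb); exists e.
by exists d; split=> // y ys; apply: bsW => b hb; apply: Hd.
Qed.

Lemma continuous_pair {n X Y} {tx : topology X} {ty : topology Y}
  {a : simplex n -> X} {b : simplex n -> Y} :
  continuous_wrt (simplex_top n) tx a -> continuous_wrt (simplex_top n) ty b ->
  continuous_wrt (simplex_top n) (prod_top tx ty) (fun s => (a s, b s)).
Proof.
move=> ha hb W hW s Ws.
have [U [V [hU [hV [Us [Vs UVW]]]]]] := hW _ Ws.
have [e1 [e1_gt0 He1]] := ha U hU s Us.
have [e2 [e2_gt0 He2]] := hb V hV s Vs.
exists (Num.min e1 e2); split=> [|y ys]; first by rewrite lt_min e1_gt0 e2_gt0.
by apply: (UVW (a y, b y)); [apply: He1 | apply: He2]; apply: close_le ys;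
  [exact: ge_minl | exact: ge_minr].
Qed.

Lemma continuous_fst {n X Y} {tx : topology X} {ty : topology Y}
  {s : simplex n -> X * Y} :
  ty (fun _ => True) -> continuous_wrt (simplex_top n) (prod_top tx ty) s ->
  continuous_wrt (simplex_top n) tx (fun x => (s x).1).
Proof.
by move=> hT hs U hU; apply: (hs (fun p => U p.1)) => p Up; exists U, (fun _ => True).
Qed.

Lemma continuous_snd {n X Y} {tx : topology X} {ty : topology Y}
  {s : simplex n -> X * Y} :
  tx (fun _ => True) -> continuous_wrt (simplex_top n) (prod_top tx ty) s ->
  continuous_wrt (simplex_top n) ty (fun x => (s x).2).
Proof.
by move=> hT hs U hU; apply: (hs (fun p => U p.2)) => p Up; exists (fun _ => True), U.
Qed.

Lemma continuous_comp_close m n (p : simplex m -> simplex n) {X} (tau : topology X) g :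
  (forall x (e : R), 0 < e ->
     exists2 d : R, 0 < d & forall y, close d y x -> close e (p y) (p x)) ->
  continuous_wrt (simplex_top n) tau g ->
  continuous_wrt (simplex_top m) tau (fun x => g (p x)).
Proof.
move=> hp hg U hU x Ux; have [e [e_gt0 He]] := hg U hU (p x) Ux.
by have [d d_gt0 Hd] := hp x e e_gt0; exists d; split=> // y /Hd /He.
Qed.

Lemma simplex_coord_bounds {n} (x : simplex n) i : 0 <= proj1_sig x i <= 1.
Proof.
case: x => f [f_ge0 f_sum] /=; rewrite f_ge0 -f_sum (bigD1 i) //= lerDl.
by apply: sumr_ge0 => j _; apply: f_ge0.
Qed.

Lemma simplex_coord_ge0 {n} (x : simplex n) i : 0 <= proj1_sig x i.
Proof. by case/andP: (simplex_coord_bounds x i). Qed.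

Lemma simplex_sum {n} (x : simplex n) : \sum_(i < n.+1) proj1_sig x i = 1.
Proof. by case: x => f []. Qed.

Lemma simplex_eq {n} (x y : simplex n) : (forall i, proj1_sig x i = proj1_sig y i) -> x = y.
Proof. by move=> xy; apply: proj1_sig_inj; apply: functional_extensionality. Qed.

Definition clamp (lo hi a : R) := if a < lo then lo else if hi < a then hi else a.

Variant clamp_spec lo hi a : R -> Type :=
  | ClampIn of lo <= a & a <= hi : clamp_spec lo hi a a
  | ClampLo of a < lo : clamp_spec lo hi a lo
  | ClampHi of lo <= a & hi < a : clamp_spec lo hi a hi.

Lemma clampP lo hi a : clamp_spec lo hi a (clamp lo hi a).
Proof.
rewrite /clamp; case: ltP => [|lo_a]; first exact: ClampLo.
by case: ltP => a_hi; [exact: ClampHi | exact: ClampIn].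
Qed.

Lemma clamp_bounds {lo hi} a : lo <= hi -> lo <= clamp lo hi a <= hi.
Proof. by move=> lo_hi; apply/andP; case: clampP; split; lra. Qed.

Lemma clamp_id lo hi a : lo <= a <= hi -> clamp lo hi a = a.
Proof. by case/andP=> lo_a a_hi; case: clampP => //; lra. Qed.

Lemma clamp_le lo hi a b : lo <= hi -> a <= b -> clamp lo hi a <= clamp lo hi b.
Proof. by move=> lo_hi ab; case: clampP; case: clampP; lra. Qed.

Lemma clamp_dist {lo hi a b e} :
  lo <= hi -> `|a - b| < e -> `|clamp lo hi a - clamp lo hi b| < e.
Proof. by rewrite !ltr_distl => lo_hi /andP[]; case: clampP; case: clampP; lra. Qed.

Definition seg_clamp {l} (l_ge0 : 0 <= l) (a : R) : seg l :=
  exist (fun t : R => 0 <= t <= l) _ (clamp_bounds a l_ge0).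

Definition seg_mcont {n l} (f : simplex n -> seg l) :=
  forall x (e : R), 0 < e -> exists2 d : R, 0 < d &
    forall y, close d y x -> `|val (f y) - val (f x)| < e.

Lemma seg_mcont_induced {n l} {f : simplex n -> seg l} : seg_mcont f ->
  continuous_wrt (simplex_top n) (induced (fun t : seg l => val t) euclid_top) f.
Proof.
move=> hf V [U [hU UV]] x /UV /hU [e [e_gt0 He]].
by have [d d_gt0 Hd] := hf x e e_gt0; exists d; split=> // y /Hd /He /UV.
Qed.

Lemma seg_mcont_continuous {n l} {f : simplex n -> seg l} : seg_mcont f ->
  continuous_wrt (simplex_top n) (seg_top l) f.
Proof. by move=> /seg_mcont_induced; apply: continuous_kelley_simplex. Qed.

Lemma seg_open_of_ball l (V : seg l -> Prop) :
  (forall x, V x -> exists2 e : R, 0 < e & forall y : seg l, `|val y - val x| < e -> V y) ->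
  seg_top l V.
Proof.
move=> hV; apply: kelley_open.
exists (fun r => exists x : seg l, exists2 e : R, 0 < e &
          (forall y : seg l, `|val y - val x| < e -> V y) /\ `|r - val x| < e); split.
  move=> r [x [e e_gt0 [He rx]]]; exists (e - `|r - val x|); split=> [|y yr].
    by rewrite subr_gt0.
  exists x; exists e => //; split=> //; have := ler_distD r y (val x); lra.
move=> x; split=> [/[dup] Vx /hV [e e_gt0 He] | [x' [e _ [He xx']]]]; last exact: He.
by exists x; exists e => //; rewrite subrr normr0.
Qed.

Lemma seg_ball_open l (c e : R) : seg_top l (fun u => `|val u - c| < e).
Proof.
apply: seg_open_of_ball => x xc; exists (e - `|val x - c|) => [|y yx].
  by rewrite subr_gt0.
have := ler_distD (val x) (val y) c; lra.
Qed.

Lemma seg_interior_open l : seg_top l (fun t => 0 < val t < l).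
Proof.
apply: seg_open_of_ball => x /andP[x_gt0 x_lt]; exists (Num.min (val x) (l - val x)).
  by rewrite lt_min x_gt0 subr_gt0.
move=> y; rewrite ltr_distl => /andP[].
have := ge_minl (val x) (l - val x); have := ge_minr (val x) (l - val x); lra.
Qed.

Section SegmentBalls.
Context {l : R} (l_gt0 : 0 < l).

Lemma seg_scale_subproof (x : simplex 1) : 0 <= proj1_sig x ord_max * l <= l.
Proof.
have /andP[x0 x1] := simplex_coord_bounds x ord_max.
by rewrite mulr_ge0 ?ler_piMl // ltW.
Qed.

Definition seg_scale (x : simplex 1) : seg l :=
  exist (fun t : R => 0 <= t <= l) _ (seg_scale_subproof x).

Lemma seg_scale_mcont : seg_mcont seg_scale.
Proof.
move=> x e e_gt0; exists (e / l) => [|y /(_ ord_max)]; first exact: divr_gt0.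
rewrite /= -mulrBl normrM (gtr0_norm l_gt0) => yx.
by rewrite -ltr_pdivlMr.
Qed.

Definition seg_coords (t : seg l) (i : 'I_2) : R :=
  if val i == 0%N then 1 - val t / l else val t / l.

Lemma seg_coords_subproof t :
  (forall i, 0 <= seg_coords t i) /\ \sum_(i < 2) seg_coords t i = 1.
Proof.
have /andP[t0 tl] := valP t.
have t_l0 : 0 <= val t / l by apply: divr_ge0 => //; apply: ltW.
have t_l1 : val t / l <= 1 by rewrite ler_pdivrMr // mul1r.
split; last by rewrite big_ord_recr big_ord1 /seg_coords /=; lra.
by move=> i; rewrite /seg_coords; case: ifP => _; lra.
Qed.

Definition seg_point (t : seg l) : simplex 1 := exist _ _ (seg_coords_subproof t).

Lemma seg_scaleK : cancel seg_point seg_scale.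
Proof. by move=> t; apply: val_inj; rewrite /= /seg_coords /= divfK // gt_eqF. Qed.

Lemma seg_point_close (s t : seg l) e :
  `|val s - val t| < e * l -> close e (seg_point s) (seg_point t).
Proof.
move=> st i; have {}st : `|val s / l - val t / l| < e.
  by rewrite -mulrBl normrM normfV (gtr0_norm l_gt0) ltr_pdivrMr.
by rewrite /= /seg_coords; case: ifP => // _; rewrite opprB addrC addrA subrK distrC.
Qed.

Lemma seg_open_ball (V : seg l -> Prop) : seg_top l V ->
  forall x, V x -> exists2 e : R, 0 < e & forall y : seg l, `|val y - val x| < e -> V y.
Proof.
move=> hV x Vx; have := hV 1 seg_scale (seg_mcont_induced seg_scale_mcont) (seg_point x).
rewrite seg_scaleK => /(_ Vx) [e [e_gt0 He]].
by exists (e * l) => [|y /seg_point_close /He]; [exact: mulr_gt0 | rewrite seg_scaleK].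
Qed.

End SegmentBalls.

Lemma seg_continuous_ball {l1 l2} {f : seg l1 -> seg l2} : 0 < l1 ->
  continuous_wrt (seg_top l1) (seg_top l2) f ->
  forall x (e : R), 0 < e -> exists2 d : R, 0 < d &
    forall y, `|val y - val x| < d -> `|val (f y) - val (f x)| < e.
Proof.
move=> l1_gt0 hf x e e_gt0.
have := seg_open_ball l1_gt0 _ (hf _ (seg_ball_open l2 (val (f x)) e)) x.
by rewrite subrr normr0; apply.
Qed.

Lemma tube_lemma {n l} {K : seg l -> Prop} (P : simplex n -> seg l -> Prop) s0 :
  compact_in (seg_top l) K ->
  (forall t0, K t0 -> exists2 r : R, 0 < r &
     forall s, close r s s0 -> forall t, `|val t - val t0| < r -> P s t) ->
  exists2 d : R, 0 < d & forall s, close d s s0 -> forall t, K t -> P s t.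
Proof.
move=> hK hP.
pose C (V : seg l -> Prop) := exists (t0 : seg l) (r : R),
  [/\ 0 < r, forall t, V t <-> `|val t - val t0| < r & forall s, close r s s0 -> forall t, V t -> P s t].
have [|t0 Kt0|Vs [VsC Vs_cov]] := hK C.
- move=> V [t0 [r [_ Vball _]]].
  by apply: open_ext (seg_ball_open l (val t0) r) _ => t; rewrite Vball.
- have [r r_gt0 Hr] := hP t0 Kt0.
  exists (fun t => `|val t - val t0| < r); split; last by rewrite subrr normr0.
  by exists t0, r; split=> // s sr t; apply: Hr.
have [d d_gt0 Hd] :
    exists2 d : R, 0 < d & forall V, In V Vs -> forall s, close d s s0 -> forall t, V t -> P s t.
  apply: list_common_radius => [d d' V _ d'd HV s /(close_le d'd) /HV // | V /VsC].
  by case=> [t0 [r [r_gt0 _ Hr]]]; exists r.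
by exists d => // s sd t /Vs_cov [V [inV Vt]]; apply: Hd V inV s sd t Vt.
Qed.

Section SimplexCone.
Context {n : nat} (s0 : simplex n).

Definition cone_coords (a : 'I_n.+1 -> R) (b : R) (j : 'I_n.+2) : R :=
  if unlift ord_max j is Some i then a i else b.

Lemma cone_coords_lift a b i : cone_coords a b (lift ord_max i) = a i.
Proof. by rewrite /cone_coords liftK. Qed.

Lemma cone_coords_widen a b i : cone_coords a b (widen_ord (leqnSn n.+1) i) = a i.
Proof.
have -> : widen_ord (leqnSn n.+1) i = lift ord_max i by apply: ord_inj; rewrite lift_max.
exact: cone_coords_lift.
Qed.

Lemma cone_coords_max a b : cone_coords a b ord_max = b.
Proof. by rewrite /cone_coords unlift_none. Qed.

Lemma cone_coords_subproof {a b} :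
  (forall i, 0 <= a i) -> 0 <= b -> \sum_(i < n.+1) a i + b = 1 ->
  (forall j, 0 <= cone_coords a b j) /\ \sum_(j < n.+2) cone_coords a b j = 1.
Proof.
move=> a_ge0 b_ge0 ab1; split=> [j|]; first by rewrite /cone_coords; case: unlift.
rewrite big_ord_recr /= cone_coords_max -ab1; congr (_ + _).
by apply: eq_bigr => i _; apply: cone_coords_widen.
Qed.

Definition cone_point {a : 'I_n.+1 -> R} {b : R} (a_ge0 : forall i, 0 <= a i)
  (b_ge0 : 0 <= b) (ab1 : \sum_(i < n.+1) a i + b = 1) : simplex n.+1 :=
  exist _ (cone_coords a b) (cone_coords_subproof a_ge0 b_ge0 ab1).

Definition collapse_coords (x : simplex n.+1) (i : 'I_n.+1) : R :=
  proj1_sig x (widen_ord (leqnSn n.+1) i) + proj1_sig x ord_max * proj1_sig s0 i.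

Lemma collapse_subproof x :
  (forall i, 0 <= collapse_coords x i) /\ \sum_(i < n.+1) collapse_coords x i = 1.
Proof.
split=> [i|]; first by rewrite addr_ge0 ?mulr_ge0 ?simplex_coord_ge0.
by rewrite big_split /= -mulr_sumr !simplex_sum mulr1 -big_ord_recr simplex_sum.
Qed.

Definition collapse (x : simplex n.+1) : simplex n := exist _ _ (collapse_subproof x).

Lemma collapse_close x (e : R) : 0 < e ->
  exists2 d : R, 0 < d & forall y, close d y x -> close e (collapse y) (collapse x).
Proof.
move=> e_gt0; exists (e / 2) => [|y yx i]; first lra.
have := yx (widen_ord (leqnSn n.+1) i); have := yx ord_max.
have /andP[s0_ge0 s0_le1] := simplex_coord_bounds s0 i.
rewrite /= /collapse_coords !ltr_distl => /andP[y1 y2] /andP[y3 y4]; apply/andP; split; nra.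
Qed.

Lemma cone_mid_ge0 i : 0 <= proj1_sig s0 i / 2.
Proof. by have := simplex_coord_ge0 s0 i; lra. Qed.

Lemma cone_mid_sum : \sum_(i < n.+1) proj1_sig s0 i / 2 + 1 / 2 = 1.
Proof. by rewrite -mulr_suml simplex_sum; lra. Qed.

Lemma half_ge0 : 0 <= 1 / 2 :> R.
Proof. lra. Qed.

Definition cone_mid : simplex n.+1 := cone_point cone_mid_ge0 half_ge0 cone_mid_sum.

Lemma collapse_cone_mid : collapse cone_mid = s0.
Proof.
apply: simplex_eq => i; rewrite /= /collapse_coords /cone_mid /=.
by rewrite cone_coords_widen cone_coords_max; lra.
Qed.

Lemma cone_mid_max : proj1_sig cone_mid ord_max = 1 / 2.
Proof. exact: cone_coords_max. Qed.

Lemma collapse_lift {d : R} : 0 < d ->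
  exists2 e : R, 0 < e & forall s, close e s s0 -> forall h : R, `|h - 1 / 2| < e ->
    exists x, [/\ collapse x = s, proj1_sig x ord_max = h & close d x cone_mid].
Proof.
move=> d_gt0; have [m m_gt0 Hm] := pos_lower_bound (proj1_sig s0).
pose e := Num.min (d / 2) (Num.min (1 / 4) (m / 4)).
have e_d : e <= d / 2 := ge_minl _ _.
have e_14 : e <= 1 / 4 := le_trans (ge_minr _ _) (ge_minl _ _).
have e_m : e <= m / 4 := le_trans (ge_minr _ _) (ge_minr _ _).
exists e => [|s se h]; first by rewrite !lt_min; lra.
rewrite ltr_distl => /andP[h1 h2].
have x_ge0 i : 0 <= proj1_sig s i - h * proj1_sig s0 i.
  have := se i; rewrite ltr_distl => /andP[si1 si2].
  have := simplex_coord_ge0 s0 i; rewrite le0r => /orP[/eqP s0i0|s0i_gt0].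
    by rewrite s0i0 mulr0 subr0 simplex_coord_ge0.
  have := Hm i s0i_gt0.
  have : 0 <= (1 / 2 + e - h) * proj1_sig s0 i by rewrite mulr_ge0 //; lra.
  have : 0 <= (1 / 4 - e) * proj1_sig s0 i by rewrite mulr_ge0 //; lra.
  lra.
have h_ge0 : 0 <= h by lra.
have x_sum : \sum_(i < n.+1) (proj1_sig s i - h * proj1_sig s0 i) + h = 1.
  by rewrite sumrB -mulr_sumr !simplex_sum; lra.
exists (cone_point x_ge0 h_ge0 x_sum); split.
- apply: simplex_eq => i; rewrite /= /collapse_coords /cone_point /=.
  by rewrite cone_coords_widen cone_coords_max; lra.
- exact: cone_coords_max.
move=> j; rewrite /cone_point /cone_mid /=; case: (unliftP ord_max j) => [i ->|->].
  2: by rewrite !cone_coords_max ltr_distl; lra.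
rewrite !cone_coords_lift; have := se i; rewrite !ltr_distl => /andP[si1 si2].
have /andP[s0i_ge0 s0i_le1] := simplex_coord_bounds s0 i.
have : 0 <= (e - (h - 1 / 2)) * proj1_sig s0 i by rewrite mulr_ge0 //; lra.
have : 0 <= (e + (h - 1 / 2)) * proj1_sig s0 i by rewrite mulr_ge0 //; lra.
have : 0 <= e * (1 - proj1_sig s0 i) by rewrite mulr_ge0 //; lra.
lra.
Qed.

End SimplexCone.

Lemma seg1_half_subproof : 0 <= (1 / 2 : R) <= 1.
Proof. apply/andP; split; lra. Qed.

Definition seg1_half : seg 1 := exist _ (1 / 2) seg1_half_subproof.

Section Reparametrizations.
Context {l : R}.

Definition Gfun (p : Gsp 1 l) : seg 1 -> seg l := proj1_sig (proj1_sig p).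

Lemma Gfun_continuous p : continuous_wrt (seg_top 1) (seg_top l) (Gfun p).
Proof. exact: proj2_sig (proj1_sig p). Qed.

Lemma Gfun_mono p {s t} : val s <= val t -> val (Gfun p s) <= val (Gfun p t).
Proof. exact: (proj1 (proj2_sig p)). Qed.

Lemma Gfun_bij p : bijective (Gfun p).
Proof. by have [g [fK [gK _]]] := proj2 (proj2_sig p); exists g. Qed.

Lemma G_top_subbasic {K U} : compact_in (seg_top 1) K -> seg_top l U ->
  G_top 1 l (fun p => forall t, K t -> U (Gfun p t)).
Proof.
by move=> hK hU; apply: kelley_open; eexists; split; first exact: TOP_top_subbasic hK hU.
Qed.

Lemma continuous_G_top n (a : simplex n -> Gsp 1 l) :
  (forall K U, compact_in (seg_top 1) K -> seg_top l U ->
     simplex_top n (fun s => forall t, K t -> U (Gfun (a s) t))) ->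
  continuous_wrt (simplex_top n) (G_top 1 l) a.
Proof.
move=> ha; apply: continuous_kelley_simplex => A [A' [hA' AA']].
have hc : continuous_wrt (simplex_top n) (compact_open (seg_top 1) (seg_top l))
            (fun s => proj1_sig (a s)).
  apply: continuous_generated => b [K [U [hK [hU bKU]]]].
  by apply: open_ext (ha K U hK hU) _ => s; rewrite bKU.
by apply: open_ext (hA' n _ hc) _ => s; rewrite AA'.
Qed.

Context (l_gt0 : 0 < l).

Lemma Gfun0 p : val (Gfun p seg1_0) = 0.
Proof.
have [g _ gK] := Gfun_bij p.
have l0 : 0 <= (0 : R) <= l by rewrite lexx ltW.
have := @Gfun_mono p seg1_0 (g (exist _ 0 l0)).
rewrite gK /=; case/andP: (valP (g (exist _ 0 l0))) => g0 _.
by case/andP: (valP (Gfun p seg1_0)) => f0 _ /(_ g0) f0'; apply/eqP; rewrite eq_le f0 f0'.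
Qed.

Lemma Gfun1 p : val (Gfun p seg1_1) = l.
Proof.
have [g _ gK] := Gfun_bij p.
have ll : 0 <= l <= l by rewrite lexx ltW.
have := @Gfun_mono p (g (exist _ l ll)) seg1_1.
rewrite gK /=; case/andP: (valP (g (exist _ l ll))) => _ g1.
by case/andP: (valP (Gfun p seg1_1)) => _ f1 /(_ g1) f1'; apply/eqP; rewrite eq_le f1 f1'.
Qed.

Lemma Gfun_half p : 0 < val (Gfun p seg1_half) < l.
Proof.
have f_inj := bij_inj (Gfun_bij p).
have half_ne t : val t <> 1 / 2 -> val (Gfun p seg1_half) <> val (Gfun p t).
  by move=> ht /val_inj /f_inj /(congr1 val) /= /esym.
have := half_ne seg1_0; rewrite Gfun0 /=; have := half_ne seg1_1; rewrite Gfun1 /=.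
case/andP: (valP (Gfun p seg1_half)) => f0 fl h1 h0.
rewrite !lt_neqAle f0 fl eq_sym !andbT; apply/andP; split; apply/eqP.
- by apply: h0; lra.
- by apply: h1; lra.
Qed.

Lemma G_pointwise_continuous {n} {a : simplex n -> Gsp 1 l} :
  continuous_wrt (simplex_top n) (G_top 1 l) a ->
  forall s0 t (e : R), 0 < e -> exists2 d : R, 0 < d & forall s, close d s s0 ->
    `|val (Gfun (a s) t) - val (Gfun (a s0) t)| < e.
Proof.
move=> ha s0 t e e_gt0.
have hB := G_top_subbasic (compact_in_point _ t) (seg_ball_open l (val (Gfun (a s0) t)) e).
have [|d [d_gt0 Hd]] := ha _ hB s0; first by move=> _ ->; rewrite subrr normr0.
by exists d => // s /Hd; apply.
Qed.

Lemma G_joint_continuous {n} {a : simplex n -> Gsp 1 l} :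
  continuous_wrt (simplex_top n) (G_top 1 l) a ->
  forall s0 (t0 : seg 1) (e : R), 0 < e -> exists2 d : R, 0 < d & forall s, close d s s0 ->
    forall t : seg 1, `|val t - val t0| < d ->
      `|val (Gfun (a s) t) - val (Gfun (a s0) t0)| < e.
Proof.
move=> ha s0 t0 e e_gt0; have e2_gt0 : 0 < e / 2 by lra.
(* phi_s(t) is squeezed between phi_s(tm) and phi_s(tp), where pointwise
   continuity applies. *)
have [c c_gt0 Hc] := seg_continuous_ball ltr01 (Gfun_continuous (a s0)) t0 _ e2_gt0.
pose tm := seg_clamp ler01 (val t0 - c / 2); pose tp := seg_clamp ler01 (val t0 + c / 2).
have [dm dm_gt0 Hdm] := G_pointwise_continuous ha s0 tm _ e2_gt0.
have [dp dp_gt0 Hdp] := G_pointwise_continuous ha s0 tp _ e2_gt0.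
exists (Num.min (c / 2) (Num.min dm dp)) => [|s sd t tt0].
  by rewrite !lt_min dm_gt0 dp_gt0 andbT; lra.
have tt0' : `|val t - val t0| < c / 2 := lt_le_trans tt0 (ge_minl _ _).
have clamp_t (u : seg 1) : clamp 0 1 (val u) = val u by apply: clamp_id; exact: (valP u).
have tm_t : val tm <= val t.
  by rewrite -clamp_t clamp_le ?ler01 //; move: tt0'; rewrite ltr_distl; lra.
have t_tp : val t <= val tp.
  by rewrite -clamp_t clamp_le ?ler01 //; move: tt0'; rewrite ltr_distl; lra.
have tm_t0 : `|val tm - val t0| < c.
  rewrite -[X in `|_ - X|]clamp_t; apply: clamp_dist ler01 _.
  by rewrite addrAC subrr add0r normrN gtr0_norm; lra.
have tp_t0 : `|val tp - val t0| < c.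
  rewrite -[X in `|_ - X|]clamp_t; apply: clamp_dist ler01 _.
  by rewrite addrAC subrr add0r gtr0_norm; lra.
have := Hdm s (close_le (le_trans (ge_minr _ _) (ge_minl _ _)) sd).
have := Hdp s (close_le (le_trans (ge_minr _ _) (ge_minr _ _)) sd).
have := Hc _ tm_t0; have := Hc _ tp_t0.
have := Gfun_mono (a s) tm_t; have := Gfun_mono (a s) t_tp.
rewrite !ltr_distl; lra.
Qed.

End Reparametrizations.

Section GlobeQuotient.
Context {Z : Type} {l : R} (l_gt0 : 0 < l).

Variant glob_q_spec (z : Z) (t : seg l) : glob_pt Z l -> Type :=
  | GlobInt (h : 0 < val t < l) : glob_q_spec z t (@globint Z l z (exist _ (val t) h))
  | Glob0 of val t = 0 : glob_q_spec z t glob0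
  | Glob1 of val t = l : glob_q_spec z t glob1.

Lemma glob_qP z t : glob_q_spec z t (glob_q l (inr (z, t))).
Proof.
rewrite /glob_q; case: insubP => [u ut tu|].
  have -> : u = exist _ (val t) ut by apply: val_inj.
  exact: GlobInt.
case/andP: (valP t) => t0 tl; rewrite negb_and -!leNgt => t_out.
case: eqP => [|t_ne0]; first exact: Glob0.
apply: Glob1; apply/eqP; rewrite eq_le tl; case/orP: t_out => // t_le0.
by case: t_ne0; apply/eqP; rewrite eq_le t_le0.
Qed.

Lemma glob_q_time_inj {z z' : Z} {u u' : seg l} :
  glob_q l (inr (z, u)) = glob_q l (inr (z', u')) -> u = u'.
Proof.
move=> e; apply: val_inj; move: e.
case: glob_qP => [h|u0|ul]; case: glob_qP => [h'|u0'|ul'] //; try lra.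
by case.
Qed.

Lemma glob_q_space_inj {z z' : Z} {u u' : seg l} : 0 < val u < l ->
  glob_q l (inr (z, u)) = glob_q l (inr (z', u')) -> z = z'.
Proof.
move=> u_int e; have uu' := glob_q_time_inj e; subst u'; move: e.
by case: glob_qP => [h|u0|ul]; [case: glob_qP => // h' [] | exfalso; lra | exfalso; lra].
Qed.

Lemma glob_q_at0 (z : Z) (u : seg l) : val u = 0 -> glob_q l (inr (z, u)) = glob0.
Proof.
by move=> u0; case: glob_qP => [h|_|ul] //; exfalso; [case/andP: h|]; have := l_gt0; lra.
Qed.

Lemma glob_q_atl (z : Z) (u : seg l) : val u = l -> glob_q l (inr (z, u)) = glob1.
Proof.
by move=> ul; case: glob_qP => [h|u0|_] //; exfalso; [case/andP: h|]; have := l_gt0; lra.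
Qed.

Variable tauZ : topology Z.

Lemma glob_open_of_prod (U : glob_pt Z l -> Prop) :
  prod_top tauZ (seg_top l) (fun p => U (glob_q l (inr p))) -> glob_top tauZ l U.
Proof. by move=> hU; apply: kelley_open; split; last exact: kelley_open. Qed.

Definition glob_of_time (U : seg l -> Prop) (g : glob_pt Z l) :=
  exists z u, U u /\ g = glob_q l (inr (z, u)).

Lemma glob_of_timeE U z u : glob_of_time U (glob_q l (inr (z, u))) <-> U u.
Proof.
split=> [[z' [u' [Uu' /glob_q_time_inj ->]]] // | Uu].
by exists z, u.
Qed.

Lemma glob_of_time_open {U} :
  tauZ (fun _ => True) -> seg_top l U -> glob_top tauZ l (glob_of_time U).
Proof.
move=> hT hU; apply: glob_open_of_prod => -[z u] /glob_of_timeE Uu.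
exists (fun _ => True), U; do 4!split=> //.
by move=> [z' u'] _ /= Uu'; apply/glob_of_timeE.
Qed.

Definition glob_of_space (V : Z -> Prop) (g : glob_pt Z l) :=
  exists z u, [/\ V z, 0 < val u < l & g = glob_q l (inr (z, u))].

Lemma glob_of_spaceE V z u : 0 < val u < l ->
  glob_of_space V (glob_q l (inr (z, u))) <-> V z.
Proof.
move=> u_int; split=> [[z' [u' [Vz' u'_int /[dup] /glob_q_time_inj uu']]] | Vz].
  by subst u'; move/(glob_q_space_inj u_int) ->.
by exists z, u.
Qed.

Lemma glob_of_space_open {V} : tauZ V -> glob_top tauZ l (glob_of_space V).
Proof.
move=> hV; apply: glob_open_of_prod => -[z u] [z' [u' [Vz' u'_int e]]].
have uu' := glob_q_time_inj e; subst u'.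
have zz' := glob_q_space_inj u'_int e; subst z'.
exists V, (fun t => 0 < val t < l); do 2!split=> //; first exact: seg_interior_open.
by do 2!split=> //; move=> [y t] /= Vy t_int; apply/glob_of_spaceE.
Qed.

End GlobeQuotient.

Section GlobePaths.
Context {Z : Type} (tauZ : topology Z) {l : R} (l_gt0 : 0 < l).

Definition glob_path (p : Gsp 1 l * Z) (t : seg 1) : glob_pt Z l :=
  glob_q l (inr (p.2, Gfun p.1 t)).

Lemma glob_path_continuous p : continuous_wrt (seg_top 1) (glob_top tauZ l) (glob_path p).
Proof.
apply: kelley_continuous => n s hs V [_ hV]; apply: (hV n (fun x => (p.2, Gfun p.1 (s x)))).
apply: continuous_pair => [U _|]; first exact: simplex_top_const.
by move=> U /(Gfun_continuous p.1); apply.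
Qed.

Lemma glob_path_exec p :
  glob_exec tauZ l (exist _ _ (glob_path_continuous p)) /\
  glob_path p seg1_0 = glob0 /\ glob_path p seg1_1 = glob1.
Proof.
split; first by exists p.2, p.1.
split; first exact: glob_q_at0 l_gt0 _ _ (Gfun0 l_gt0 _).
exact: glob_q_atl l_gt0 _ _ (Gfun1 l_gt0 _).
Qed.

Definition path_of (p : Gsp 1 l * Z) : Pglob01 tauZ l :=
  exist _ (exist _ _ (glob_path_continuous p)) (glob_path_exec p).

Let exec_witness (g : Pglob01 tauZ l) :=
  constructive_indefinite_description _ (proj1 (proj2_sig g)).

Definition param_z (g : Pglob01 tauZ l) : Z := proj1_sig (exec_witness g).

Definition param_G (g : Pglob01 tauZ l) : Gsp 1 l :=
  proj1_sig (constructive_indefinite_description _ (proj2_sig (exec_witness g))).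

Definition param_of (g : Pglob01 tauZ l) : Gsp 1 l * Z := (param_G g, param_z g).

Lemma param_ofP g : proj1_sig (proj1_sig g) = glob_path (param_of g).
Proof.
rewrite /param_of /param_G; case: constructive_indefinite_description => phi hphi /=.
by apply: functional_extensionality => t; rewrite hphi.
Qed.

Lemma param_ofK : cancel param_of path_of.
Proof. by move=> g; do 2!apply: proj1_sig_inj; rewrite /= param_ofP. Qed.

Lemma path_ofK : cancel path_of param_of.
Proof.
move=> [phi z]; have := param_ofP (path_of (phi, z)); case: (param_of _) => phi' z' /= e.
have e_t t : glob_q l (inr (z, Gfun phi t)) = glob_q l (inr (z', Gfun phi' t)) := equal_f e t.
have -> := glob_q_space_inj (Gfun_half l_gt0 phi) (e_t seg1_half).
congr pair; do 2!apply: proj1_sig_inj; apply: functional_extensionality => t.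
exact: esym (glob_q_time_inj (e_t t)).
Qed.

Context (tauZ_setT : tauZ (fun _ => True)).

Let path_top :=
  induced (fun g : Pglob01 tauZ l => proj1_sig g) (TOP_top (seg_top 1) (glob_top tauZ l)).

Lemma param_G_continuous {n} {sg : simplex n -> Pglob01 tauZ l} :
  continuous_wrt (simplex_top n) path_top sg ->
  continuous_wrt (simplex_top n) (G_top 1 l) (fun s => param_G (sg s)).
Proof.
move=> hs; apply: continuous_G_top => K U hK hU.
have hB := TOP_top_subbasic hK (glob_of_time_open tauZ tauZ_setT hU).
apply: open_ext (hs _ (ex_intro _ _ (conj hB (fun _ => iff_refl _)))) _ => s /=.
rewrite param_ofP; split=> sKU t Kt; first exact: (proj1 (glob_of_timeE _ _ _) (sKU t Kt)).
by apply/glob_of_timeE; apply: sKU.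
Qed.

Lemma param_z_continuous {n} {sg : simplex n -> Pglob01 tauZ l} :
  continuous_wrt (simplex_top n) path_top sg ->
  continuous_wrt (simplex_top n) tauZ (fun s => param_z (sg s)).
Proof.
move=> hs V hV.
have hB := TOP_top_subbasic (compact_in_point (seg_top 1) seg1_half)
  (glob_of_space_open tauZ (l := l) hV).
apply: open_ext (hs _ (ex_intro _ _ (conj hB (fun _ => iff_refl _)))) _ => s /=.
rewrite param_ofP; have half_int := Gfun_half l_gt0 (param_G (sg s)).
split=> [/(_ _ erefl) | Vz t ->]; first exact: proj1 (glob_of_spaceE _ _ _ half_int).
exact: proj2 (glob_of_spaceE _ _ _ half_int) Vz.
Qed.

Lemma param_of_continuous :
  continuous_wrt (Pglob01_top tauZ l) (kelley (prod_top (G_top 1 l) tauZ)) param_of.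
Proof.
apply: kelley_continuous => n sg hs.
exact: continuous_pair (param_G_continuous hs) (param_z_continuous hs).
Qed.

Lemma glob_open_nbhd {n} {zf : simplex n -> Z} {U} :
  continuous_wrt (simplex_top n) tauZ zf -> glob_top tauZ l U ->
  forall s0 u0, U (glob_q l (inr (zf s0, u0))) ->
  exists2 e : R, 0 < e & forall s, close e s s0 ->
    forall u : seg l, `|val u - val u0| < e -> U (glob_q l (inr (zf s, u))).
Proof.
move=> hz hU s0 u0 U0; have l_ge0 := ltW l_gt0.
(* U is only known to be open along simplices of Z x [0,l]; the simplex T of
   dimension n+1 passes through (zf s0, u0) at cone_mid s0 and, by
   collapse_lift, covers a product neighbourhood of that point. *)
pose T x := (zf (collapse s0 x), seg_clamp l_ge0 (val u0 + (proj1_sig x ord_max - 1 / 2))).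
have hT : continuous_wrt (simplex_top n.+1) (prod_top tauZ (seg_top l)) T.
  apply: continuous_pair; first exact: continuous_comp_close (collapse_close s0) hz.
  apply: seg_mcont_continuous => x e e_gt0; exists e => // y /(_ ord_max) yx.
  by apply: (clamp_dist l_ge0); move: yx; rewrite !ltr_distl; lra.
have clamp_u (u : seg l) : clamp 0 l (val u) = val u by apply: clamp_id; exact: (valP u).
have hUT : simplex_top n.+1 (fun x => U (glob_q l (inr (T x)))).
  by apply: hU => V [_ hV]; apply: hV.
have T_mid : T (cone_mid s0) = (zf s0, u0).
  rewrite /T collapse_cone_mid cone_mid_max subrr addr0; congr pair.
  by apply: val_inj; rewrite /= clamp_u.
have U_mid : U (glob_q l (inr (T (cone_mid s0)))) by rewrite T_mid.
have [d [d_gt0 Hd]] := hUT _ U_mid.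
have [e e_gt0 He] := collapse_lift s0 d_gt0.
exists e => // s se u ue.
have [|x [xs xh xd]] := He s se (1 / 2 + (val u - val u0)).
  by rewrite addrAC subrr add0r.
have T_x : T x = (zf s, u).
  rewrite /T xs xh addrAC subrr add0r addrC subrK; congr pair.
  by apply: val_inj; rewrite /= clamp_u.
by have := Hd x xd; rewrite T_x.
Qed.

Lemma glob_path_local {n} {sg : simplex n -> Gsp 1 l * Z} {U} :
  continuous_wrt (simplex_top n) (prod_top (G_top 1 l) tauZ) sg -> glob_top tauZ l U ->
  forall s0 t0, U (glob_path (sg s0) t0) ->
  exists2 r : R, 0 < r & forall s, close r s s0 ->
    forall t, `|val t - val t0| < r -> U (glob_path (sg s) t).
Proof.
move=> hs hU s0 t0 U0.
have [e e_gt0 He] := glob_open_nbhd (continuous_snd (kelley_setT _) hs) hU _ _ U0.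
have [r r_gt0 Hr] := G_joint_continuous (continuous_fst tauZ_setT hs) s0 t0 _ e_gt0.
exists (Num.min e r) => [|s sr t tt0]; first by rewrite lt_min e_gt0 r_gt0.
apply: He (close_le (ge_minl _ _) sr) _ _.
exact: Hr s (close_le (ge_minr _ _) sr) t (lt_le_trans tt0 (ge_minr _ _)).
Qed.

Lemma path_of_continuous :
  continuous_wrt (kelley (prod_top (G_top 1 l) tauZ)) (Pglob01_top tauZ l) (path_of).
Proof.
apply: kelley_continuous => n sg hs V [V' [hV' VV']].
have hc : continuous_wrt (simplex_top n) (compact_open (seg_top 1) (glob_top tauZ l))
            (fun s => proj1_sig (path_of (sg s))).
  apply: continuous_generated => b [K [U [hK [hU bKU]]]] s0 H0.
  have [d d_gt0 Hd] := tube_lemma (fun s t => U (glob_path (sg s) t)) s0 hK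
    (fun t0 Kt0 => glob_path_local hs hU s0 t0 (proj1 (bKU _) H0 t0 Kt0)).
  by exists d; split=> // s /Hd sK; apply/bKU.
by apply: open_ext (hV' n _ hc) _ => s; rewrite VV'.
Qed.

End GlobePaths.

Theorem proposition2p12 (Z : Type) (tauZ : topology Z)
  (hZ : is_topology tauZ) (hZD : Delta_generated tauZ) (l : R) (hl : 0 < l) :
  homeomorphic (Pglob01_top tauZ l)
               (kelley (prod_top (G_top 1 l) tauZ)).
Proof.
have tauZ_setT := proj1 hZ.
exists (param_of tauZ), (path_of tauZ hl).
split; first exact: param_ofK.
split; first exact: path_ofK.
split; first exact: (param_of_continuous tauZ hl tauZ_setT).
exact: (path_of_continuous tauZ hl tauZ_setT).
Qed.
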